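(* Let $K$ be a linkoid diagram on $S^2$ with exactly one knotoidal component and $\ell>0$ loop components, and let $c$ be a separating crossing of $K$. Then $c$ is removable.
   Context: A linkoid diagram on $S^2$ is an immersion of a disjoint union of oriented intervals (knotoidal components, with tail and head endpoints) and oriented circles (loop components) into $S^2$ whose only singularities are transverse double points (crossings) away from the endpoints, with over/under information. A diagram is split if its universe (the graph with crossings as degree-4 vertices and endpoints as degree-1 vertices) is disconnected. A crossing $c$ is separating if one of its two possible (unoriented) smoothings yields a split diagram. A crossing $c$ is removable if it is attached on one side to a $(1,1)$-tangle: there is a closed disk $\Delta\subset S^2$ not containing $c$ and containing no endpoints of knotoidal components, whose boundary meets the diagram transversally in exactly two points, such that these two points are joined to $c$ by two crossing-free arcs of the diagram that are adjacent half-edges at $c$ (one leaving $c$ into $\Delta$, one returning from $\Delta$ to $c$); the part of the diagram in $\Delta$ is the tangle $T$, and $c$ can be removed by Reidemeister moves by flipping $T$ over.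
   Formalization: A crossing c counts as separating only when K itself is non-split, so its universe is connected, and one of the two smoothings of c yields a split diagram. The paper assumes this as well. *)

(* Linkoid diagrams on S^2 encoded as combinatorial maps
   (rotation systems). *)
From mathcomp Require Import all_boot perm.
Set Implicit Arguments. Unset Strict Implicit. Unset Printing Implicit Defensive.

(* A (candidate) linkoid diagram with dart (half-edge) set D:
   - [sigma]  : rotation around vertices (counterclockwise cyclic order of the
                half-edges at a vertex); vertices = sigma-orbits.
                Crossings are the 4-element orbits, endpoints of knotoidal
                components are the fixed points of sigma (degree-1 vertices).
   - [alpha]  : fixed-point-free involution pairing the two half-edges of an
                edge of the universe.
   - [over d] : for a dart at a crossing, whether the strand through d is the
                over-strand.
   - [out d]  : whether the orientation of the component runs along d away
                from its vertex (for an endpoint dart: true = tail, false = head).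
   - [free_loops] : number of loop components with no crossing at all
                (crossing-free circles, which carry no darts). *)
Record diagram (D : finType) := Diagram {
  sigma : {perm D};
  alpha : {perm D};
  over : D -> bool;
  out : D -> bool;
  free_loops : nat
}.

Section Diagrams.
Variable D : finType.
Variable K : diagram D.

Local Notation s := (sigma K).
Local Notation a := (alpha K).

Definition ncomp (r : rel D) : nat := #|[set x | root r x == x]|.

Definition symrel (f : D -> D) : rel D := [rel x y | (y == f x) || (x == f y)].

Definition is_endpoint (x : D) : bool := s x == x.
Definition is_crossing (x : D) : bool := s x != x.

(* face permutation *)
Definition phi (x : D) : D := s (a x).

Definition univ : rel D :=
  [rel x y | [|| y == s x, x == s y, y == a x | x == a y]].

(* number of connected components of the universe (crossing-free circles are
   components of their own) *)
Definition n_univ : nat := ncomp univ + free_loops K.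

Definition split_diagram : Prop := 2 <= n_univ.

Definition is_linkoid : Prop :=
  [/\ (forall x, a (a x) = x /\ a x != x),
      (forall x, s x = x \/ (s (s x) != x /\ s (s (s (s x))) = x)),
      (forall x, s x != x -> over K (s (s x)) = over K x /\ over K (s x) = ~~ over K x),
      (forall x, out K (a x) = ~~ out K x /\ (s x != x -> out K (s (s x)) = ~~ out K x))
    & (* genus 0 (embedding in S^2) for every connected component, via Euler:
         sum over components of (V - E + F) = 2 * #components *)
      2 * (ncomp (symrel s) + ncomp (symrel phi)) = #|D| + 4 * ncomp univ].

(* components of the link(oid): follow an edge, or go straight through a
   crossing *)
Definition strand : rel D :=
  [rel x y | [|| y == a x, x == a y,
                 (s x != x) && (y == s (s x)) | (s y != y) && (x == s (s y))]].

Definition comp_has_endpoint (x : D) : bool :=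
  [exists y, connect strand x y && is_endpoint y].

Definition num_knotoidal : nat :=
  #|[set x | (root strand x == x) && comp_has_endpoint x]|.

Definition num_loops : nat :=
  #|[set x | (root strand x == x) && ~~ comp_has_endpoint x]| + free_loops K.

Definition cdarts (c : D) : {set D} := [set c; s c; s (s c); s (s (s c))].

(* universe after smoothing the crossing of c; [b] selects one of the two
   unoriented smoothings: the half-edges p, s p are joined and so are
   s^2 p, s^3 p, where p = c or p = s c.  The darts at c become interior
   points of the two new arcs. *)
Definition smooth_univ (c : D) (b : bool) : rel D :=
  let p := if b then s c else c in
  [rel x y | [|| y == a x, x == a y,
     (x \notin cdarts c) && (y \notin cdarts c) && ((y == s x) || (x == s y)),
     (x == p) && (y == s p), (y == p) && (x == s p),
     (x == s (s p)) && (y == s (s (s p))) |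
     (y == s (s p)) && (x == s (s (s p)))]].

Definition n_smooth (c : D) (b : bool) : nat := ncomp (smooth_univ c b) + free_loops K.

Definition separating (c : D) : Prop :=
  ~ split_diagram /\ exists b : bool, 2 <= n_smooth c b.

(* c is removable: there are adjacent half-edges h, s h at c and a disk
   Delta, not containing c nor endpoints, whose boundary meets the diagram in
   exactly two points, one on the edge of h and one on the edge of s h.
   Combinatorially: either the two half-edges form a single edge (Delta
   contains a crossing-free arc), or the darts S of the vertices inside Delta
   are attached to the rest of the diagram exactly by the edges of h and s h. *)
Definition removable (c : D) : Prop :=
  exists2 h, h \in cdarts c &
    (a h = s h) \/
    exists S : {set D},
      [/\ forall x, x \in S -> s x \in S,
          forall x, x \in S -> (x \notin cdarts c) && is_crossing x
        & forall x, x \notin S -> (a x \in S <-> (x = h \/ x = s h))].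

End Diagrams.

(* A smoothing of c that splits the connected universe leaves two sides, each
   containing two adjacent half-edges of c and everything reachable from them
   away from c.  A side has an even number of darts, which the edges pair off;
   going straight through crossings (and swapping the two half-edges of c in the
   side) is a second involution of it, whose fixed points are the endpoints.  So
   each side holds an even number of endpoints.  The single knotoidal component
   has at most two endpoints, hence one side has none: it is the tangle over
   which c is removed. *)

From mathcomp Require Import all_boot perm zify.
Set Implicit Arguments. Unset Strict Implicit. Unset Printing Implicit Defensive.

Section Involution.
Variables (T : finType) (f : T -> T).

Lemma even_card_fixfree_involution (X : {set T}) :
  {in X, forall x, f x \in X} -> {in X, involutive f} ->
  {in X, forall x, f x != x} -> ~~ odd #|X|.
Proof.
move=> f_stable fK f_fixfree.
(* each pair {x, f x} is represented by its element of smaller rank *)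
set X1 := [set x in X | enum_rank x < enum_rank (f x)].
have X1_sub : {subset X1 <= X} by move=> x; rewrite inE => /andP[].
have f_inj : {in X1 &, injective f}.
  by move=> x y /X1_sub xX /X1_sub yX /(congr1 f); rewrite !fK.
have X1_f : [disjoint X1 & f @: X1].
  apply/pred0P => x /=; apply/andP => -[+ /imsetP[y yX1 xE]]; rewrite xE.
  have yX := X1_sub y yX1.
  move: yX1; rewrite !inE fK // => /andP[_ /ltnW].
  by rewrite leqNgt => /negbTE ->; rewrite andbF.
have -> : X = X1 :|: f @: X1.
  apply/setP => x; rewrite in_setU; apply/idP/idP => [xX|].
    case: (ltngtP (enum_rank x) (enum_rank (f x))) =>
      [lt_x | lt_fx | /val_inj/enum_rank_inj fxE].
    - by rewrite inE xX lt_x.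
    - apply/orP; right; apply/imsetP; exists (f x); last by rewrite fK.
      by rewrite inE f_stable //= fK.
    - by move: (f_fixfree x xX); rewrite -fxE eqxx.
  by case/orP=> [/X1_sub //|/imsetP[y /X1_sub yX ->]]; apply: f_stable.
by rewrite cardsU (disjoint_setI0 X1_f) cards0 subn0 card_in_imset // addnn odd_double.
Qed.

Lemma odd_card_involution (X : {set T}) :
  {in X, forall x, f x \in X} -> {in X, involutive f} ->
  odd #|X| = odd #|[set x in X | f x == x]|.
Proof.
move=> f_stable fK; set Y := [set x in X | f x != x].
have -> : #|X| = #|[set x in X | f x == x]| + #|Y|.
  rewrite -(cardsID [set x | f x == x] X).
  by congr (_ + _); apply: eq_card => x; rewrite !inE andbC.
suff evY : ~~ odd #|Y| by rewrite oddD (negbTE evY) addbF.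
apply: even_card_fixfree_involution => x; rewrite inE => /andP[xX fxx].
- by rewrite inE f_stable // fK // eq_sym.
- exact: fK.
- by [].
Qed.

End Involution.

Lemma order_dvdn_iter (T : finType) (f : T -> T) : injective f ->
  forall m x, iter m f x = x -> order f x %| m.
Proof.
move=> finj m x fmx; set n := order f x.
have iter_mul k : iter (k * n) f x = x.
  by elim: k => // k IHk; rewrite mulSn iterD IHk iter_order.
have : iter (m %% n) f x = x by rewrite {1}(divn_eq m n) addnC iterD iter_mul in fmx.
move=> /(congr1 (findex f x)); rewrite findex_iter ?ltn_pmod ?order_gt0 // findex0.
by move/eqP; rewrite /dvdn.
Qed.

Lemma ncomp_le1P (T : finType) (r : rel T) : connect_sym r ->
  reflect (forall x y, connect r x y) (ncomp r <= 1).
Proof.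
move=> r_sym; apply: (iffP card_le1_eqP) => [roots1 x y | r_conn x y].
  rewrite -(root_connect r_sym); apply/eqP/roots1; by rewrite inE root_root.
rewrite !inE => /eqP <- /eqP <-; exact/rootP/r_conn.
Qed.

Section Linkoid.
Variables (D : finType) (K : diagram D).
Local Notation s := (sigma K).
Local Notation a := (alpha K).

Lemma linkoid_darts : is_linkoid K ->
  [/\ involutive a, forall x, a x != x, forall x, s (s (s (s x))) = x
    & forall x, is_crossing K x -> s (s x) != x].
Proof.
case=> alphaP sigmaP _ _ _; split=> [x | x | x | x].
- by case: (alphaP x).
- by case: (alphaP x).
- by case: (sigmaP x) => [sx | [_ ->]] //; rewrite !sx.
- by case: (sigmaP x) => [sx | [] //]; rewrite /is_crossing sx eqxx.
Qed.

Lemma sym_univ : symmetric (univ K).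
Proof. by move=> x y; rewrite /univ /= orbCA (orbC (y == a x)). Qed.

Lemma connected_not_split (x0 : D) : ~ split_diagram K ->
  (forall x y, connect (univ K) x y) /\ free_loops K = 0.
Proof.
rewrite /split_diagram /n_univ => not_split.
have univ_sym := sym_connect_sym sym_univ.
have univ_gt0 : 0 < ncomp (univ K).
  by apply/card_gt0P; exists (root (univ K) x0); rewrite inE root_root.
split; last by lia.
by apply/ncomp_le1P; last by lia.
Qed.

Hypothesis alphaK : involutive a.
Hypothesis alpha_fixfree : forall x, a x != x.
Hypothesis sigma4 : forall x, s (s (s (s x))) = x.
Hypothesis sigma2 : forall x, is_crossing K x -> s (s x) != x.

Definition straight (x : D) : D := if is_endpoint K x then x else s (s x).

(* At an endpoint the strand turns back, so the orbit of an endpoint runs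
   through its knotoidal component once in each direction. *)
Definition strand_succ (x : D) : D := straight (a x).

Lemma straightK : involutive straight.
Proof.
move=> x; rewrite /straight /is_endpoint.
have [-> | sx] := eqVneq (s x) x; first by rewrite eqxx.
by rewrite !(inj_eq perm_inj) (negbTE sx) sigma4.
Qed.

Lemma strand_succ_inj : injective strand_succ.
Proof. by apply: (can_inj (g := a \o straight)) => x; rewrite /= straightK alphaK. Qed.

(* [straight] conjugates [strand_succ] to its inverse. *)
Lemma iter_strand_succ_straight k x :
  iter k strand_succ (straight (iter k strand_succ x)) = straight x.
Proof.
elim: k x => // k IHk x; rewrite iterSr iterS.
by rewrite {2}/strand_succ straightK alphaK IHk.
Qed.

Lemma strand_step x y : strand K x y -> y = a x \/ y = straight x.
Proof.
rewrite /strand /straight /is_endpoint /=.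
case/or4P=> [/eqP-> | /eqP-> | /andP[sx /eqP->] | /andP[sy /eqP->]].
- by left.
- by left; rewrite alphaK.
- by right; rewrite (negbTE sx).
- by right; rewrite !(inj_eq perm_inj) (negbTE sy) sigma4.
Qed.

Lemma sym_strand : symmetric (strand K).
Proof. by move=> x y; rewrite /strand /= orbCA (orbC ((s x != x) && _)). Qed.

Lemma closed_strand_orbit e : is_endpoint K e ->
  closed (strand K) (fconnect strand_succ e).
Proof.
move=> e_end; have straight_orbit z : fconnect strand_succ e z ->
    fconnect strand_succ e (straight z).
  move=> /iter_findex ez; rewrite fconnect_sym; last exact: strand_succ_inj.
  have := iter_strand_succ_straight (findex strand_succ e z) e.
  by rewrite ez {2}/straight e_end => <-; apply: fconnect_iter.
apply: intro_closed; first exact: sym_connect_sym sym_strand.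
move=> x y /strand_step[-> | ->] ex; last exact: straight_orbit.
rewrite -[a x]straightK; apply: straight_orbit.
exact: connect_trans ex (fconnect1 _ _).
Qed.

Lemma orbit_endpoint e y : is_endpoint K e -> is_endpoint K y ->
  fconnect strand_succ e y ->
  y = e \/ y = iter (order strand_succ e)./2 strand_succ e.
Proof.
move=> e_end y_end ey; set n := order strand_succ e; set k := findex strand_succ e y.
have k_lt : k < n by apply: findex_max.
have eky : iter k strand_succ e = y by apply: iter_findex.
have : n %| k + k.
  apply: order_dvdn_iter; first exact: strand_succ_inj.
  have := iter_strand_succ_straight k e.
  by rewrite iterD eky /straight e_end y_end.
case/dvdnP=> [[|[|m]] kkE]; rewrite -eky.
- by left; have -> : k = 0 by lia.
- by right; have -> : k = n./2 by rewrite -(mul1n n) -kkE addnn doubleK.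
- by exfalso; nia.
Qed.

Lemma endpoints_connected : num_knotoidal K <= 1 ->
  forall e1 e2, is_endpoint K e1 -> is_endpoint K e2 -> connect (strand K) e1 e2.
Proof.
move=> knot1 e1 e2 e1_end e2_end.
have strand_sym := sym_connect_sym sym_strand.
have root_knotoidal e : is_endpoint K e -> root (strand K) e \in
    [set x | (root (strand K) x == x) && comp_has_endpoint K x].
  move=> e_end; rewrite inE root_root // eqxx /=; apply/existsP; exists e.
  by rewrite e_end andbT strand_sym connect_root.
move/card_le1_eqP: knot1 => roots1.
rewrite -(root_connect strand_sym).
by rewrite (roots1 _ _ (root_knotoidal _ e1_end) (root_knotoidal _ e2_end)).
Qed.

Lemma card_endpoints_le2 : num_knotoidal K <= 1 -> #|[set e | is_endpoint K e]| <= 2.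
Proof.
move=> knot1; have [-> | [e0]] := set_0Vmem [set e | is_endpoint K e].
  by rewrite cards0.
rewrite inE => e0_end.
apply: leq_trans (_ : #|[set e0; iter (order strand_succ e0)./2 strand_succ e0]| <= 2).
  apply/subset_leq_card/subsetP => y; rewrite !inE => y_end.
  have : fconnect strand_succ e0 y.
    have := closed_connect (closed_strand_orbit e0_end)
      (endpoints_connected knot1 e0_end y_end).
    by rewrite !inE connect0 => <-.
  by case/(orbit_endpoint e0_end y_end) => ->; rewrite eqxx ?orbT.
by rewrite cards2; case: (_ != _).
Qed.

Variable c : D.
Hypothesis c_crossing : is_crossing K c.

Lemma cdarts_sigma x : (s x \in cdarts K c) = (x \in cdarts K c).
Proof.
have cd_sigma y : y \in cdarts K c -> s y \in cdarts K c.
  by rewrite /cdarts !inE -!orbA => /or4P[]/eqP->; rewrite ?sigma4 eqxx ?orbT.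
apply/idP/idP => [/cd_sigma/cd_sigma/cd_sigma | /cd_sigma //].
by rewrite sigma4.
Qed.

Lemma cdarts_rot q : q \in cdarts K c -> cdarts K c = cdarts K q.
Proof.
rewrite /cdarts !inE -!orbA => /or4P[]/eqP-> //; apply/setP => x; rewrite !inE ?sigma4;
  by case: (x == c); case: (x == s c); case: (x == s (s c)); case: (x == s (s (s c))).
Qed.

Lemma cdarts_crossing x : x \in cdarts K c -> is_crossing K x.
Proof.
move: c_crossing; rewrite /cdarts !inE -!orbA /is_crossing => c_cross.
by case/or4P=> /eqP->; rewrite ?(inj_eq perm_inj).
Qed.

(* One side of [c]: the darts reachable from the half-edges [q] and [s q]
   without passing through [c]. *)
Record side (q : D) (X : {set D}) : Prop := Side {
  side_cdarts : q \in cdarts K c;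
  side_mem : q \in X;
  side_mem_sigma : s q \in X;
  side_notin_sigma2 : s (s q) \notin X;
  side_notin_sigma3 : s (s (s q)) \notin X;
  side_alpha : {in X, forall x, a x \in X};
  side_sigma : {in X, forall x, x \notin cdarts K c -> s x \in X}
}.

Section Side.
Variables (q : D) (X : {set D}).
Hypothesis qX : side q X.

Lemma side_cdartsP x : x \in X -> x \in cdarts K c -> x = q \/ x = s q.
Proof.
case: qX => q_cd _ _ s2q s3q _ _ xX; rewrite (cdarts_rot q_cd) /cdarts !inE -!orbA.
by case/or4P=> /eqP x_eq; [left | right | move: s2q | move: s3q]; rewrite -?x_eq ?xX.
Qed.

Lemma side_straight x : x \in X -> x \notin cdarts K c ->
  straight x \in X /\ straight x \notin cdarts K c.
Proof.
case: qX => _ _ _ _ _ _ sX xX x_cd; rewrite /straight; case: ifP => // _.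
by rewrite !cdarts_sigma x_cd !sX ?cdarts_sigma.
Qed.

Definition side_flip (x : D) : D :=
  if x == q then s q else if x == s q then q else straight x.

Lemma side_flip_stable : {in X, forall x, side_flip x \in X}.
Proof.
move=> x xX; rewrite /side_flip.
have [_ | xq] := eqVneq x q; first exact: side_mem_sigma qX.
have [_ | xsq] := eqVneq x (s q); first exact: side_mem qX.
apply: (side_straight xX _).1; apply/negP => /(side_cdartsP xX).
by case=> /eqP; apply/negP.
Qed.

Lemma side_flipK : {in X, involutive side_flip}.
Proof.
have q_cross := cdarts_crossing (side_cdarts qX).
have sq_q : (s q == q) = false by apply/negbTE.
move=> x xX; rewrite /side_flip.
have [-> | xq] := eqVneq x q; first by rewrite sq_q eqxx.
have [-> | xsq] := eqVneq x (s q); first by rewrite eqxx.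
have x_cd : x \notin cdarts K c.
  by apply/negP => /(side_cdartsP xX) [] /eqP; apply/negP.
have [_ sx_cd] := side_straight xX x_cd.
have [sxq | _] := eqVneq (straight x) q; first by rewrite sxq (side_cdarts qX) in sx_cd.
have [sxq | _] := eqVneq (straight x) (s q).
  by rewrite sxq cdarts_sigma (side_cdarts qX) in sx_cd.
by rewrite straightK.
Qed.

Lemma side_flip_fixed x : x \in X -> (side_flip x == x) = is_endpoint K x.
Proof.
have q_cross := cdarts_crossing (side_cdarts qX).
move=> xX; rewrite /side_flip /is_endpoint.
have [-> | _] := eqVneq x q; first by rewrite (negbTE q_cross).
have [-> | _] := eqVneq x (s q); first by rewrite (inj_eq perm_inj) eq_sym.
rewrite /straight /is_endpoint; have [_ | sx] := eqVneq (s x) x; first by rewrite eqxx.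
exact/negbTE/sigma2.
Qed.

Lemma side_endpoints_even : ~~ odd #|[set x in X | is_endpoint K x]|.
Proof.
have -> : [set x in X | is_endpoint K x] = [set x in X | side_flip x == x].
  by apply/setP => x; rewrite !inE; case xX: (x \in X) => //=; rewrite side_flip_fixed.
rewrite -odd_card_involution; [| exact: side_flip_stable | exact: side_flipK].
apply: (@even_card_fixfree_involution _ a) => x xX.
- exact: (side_alpha qX xX).
- exact: alphaK.
- exact: alpha_fixfree.
Qed.

Lemma side_removable : {in X, forall x, ~~ is_endpoint K x} -> removable K c.
Proof.
case: qX => q_cd qX' sqX _ _ aX sX no_end; exists q => //.
have [aq | aq] := eqVneq (a q) (s q); [by left | right].
exists (X :\: cdarts K c); split => x.
- by rewrite !in_setD cdarts_sigma => /andP[x_cd xX]; rewrite x_cd sX.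
- by rewrite in_setD => /andP[-> /no_end].
- rewrite !in_setD negb_and negbK => x_out; split.
    move=> /andP[ax_cd /aX]; rewrite alphaK => xX.
    by move: x_out; rewrite xX orbF => /(side_cdartsP xX).
  have aX_cd y : y \in X -> a y \in cdarts K c -> a y = q \/ a y = s q.
    by move=> /aX; apply: side_cdartsP.
  case=> ->; rewrite ?aX // andbT; apply/negP.
  + case/(aX_cd _ qX') => /eqP; [by rewrite (negbTE (alpha_fixfree q)) | exact/negP].
  + case/(aX_cd _ sqX) => /eqP; last by rewrite (negbTE (alpha_fixfree _)).
    by move/eqP/(congr1 a); rewrite alphaK => sqE; rewrite sqE eqxx in aq.
Qed.

End Side.

Lemma removable_of_sides q q' X Y : side q X -> side q' Y -> [disjoint X & Y] ->
  #|[set e | is_endpoint K e]| <= 2 -> removable K c.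
Proof.
move=> qX q'Y XY endpoints_le2.
have no_endpoint (Z : {set D}) : #|[set x in Z | is_endpoint K x]| = 0 ->
    {in Z, forall x, ~~ is_endpoint K x}.
  move/cards0_eq => Z0 x xZ; apply/negP => x_end.
  by have := in_set0 x; rewrite -Z0 inE xZ x_end.
have card_le2 :
    #|[set x in X | is_endpoint K x]| + #|[set x in Y | is_endpoint K x]| <= 2.
  have EXY : [disjoint [set x in X | is_endpoint K x] & [set x in Y | is_endpoint K x]].
    by apply: disjointWl (disjointWr _ XY); apply/subsetP => x; rewrite inE => /andP[].
  rewrite -cardsUI (disjoint_setI0 EXY) cards0 addn0; apply: leq_trans endpoints_le2.
  by apply/subset_leq_card/subsetP => x; rewrite !inE => /orP[] /andP[].
have [EX0 | EY0] :
    #|[set x in X | is_endpoint K x]| = 0 \/ #|[set x in Y | is_endpoint K x]| = 0.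
  move: card_le2 (side_endpoints_even qX).
  by case: #|_| => [|[|m]] //; [left | right; lia].
- exact: side_removable qX (no_endpoint X EX0).
- exact: side_removable q'Y (no_endpoint Y EY0).
Qed.

Section Smoothing.
Variable b : bool.
Local Notation P := (if b then s c else c).
Local Notation smoothed := (smooth_univ K c b).

Lemma sym_smooth_univ : symmetric smoothed.
Proof.
move=> x y; rewrite /smooth_univ /= [(y \notin _) && _]andbC [(x == s y) || _]orbC.
rewrite orbCA; do 3 congr (_ || _); rewrite orbCA; do 2 congr (_ || _); exact: orbC.
Qed.

Lemma smooth_univ_alpha x : smoothed x (a x).
Proof. by rewrite /smooth_univ /= eqxx. Qed.

Lemma smooth_univ_sigma x : x \notin cdarts K c -> smoothed x (s x).
Proof. by move=> x_cd; rewrite /smooth_univ /= cdarts_sigma x_cd eqxx !orbT. Qed.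

Lemma smooth_univ_pair q : q = P \/ q = s (s P) ->
  smoothed q (s q) /\ smoothed (s (s q)) (s (s (s q))).
Proof. by case=> ->; rewrite ?sigma4 /smooth_univ /= !eqxx ?orbT. Qed.

Lemma smooth_pivot_cdarts : P \in cdarts K c.
Proof. by case: b; rewrite /cdarts !inE eqxx ?orbT. Qed.

Lemma smooth_univ_separates : (forall x y, connect (univ K) x y) ->
  1 < ncomp smoothed -> ~~ connect smoothed P (s (s P)).
Proof.
move=> univ_conn smooth_split; apply/negP => P_s2P.
have smoothed_sym := sym_connect_sym sym_smooth_univ.
have [P_sP s2P_s3P] := smooth_univ_pair (or_introl erefl).
have cd_conn y : y \in cdarts K c -> connect smoothed P y.
  rewrite (cdarts_rot smooth_pivot_cdarts) /cdarts !inE -!orbA.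
  case/or4P=> /eqP->; [exact: connect0 | exact: connect1 | by [] |].
  exact: connect_trans P_s2P (connect1 s2P_s3P).
have sigma_edge x : connect smoothed x (s x).
  have [x_cd | x_cd] := boolP (x \in cdarts K c).
    by apply: connect_trans (cd_conn _ _); rewrite ?cdarts_sigma // smoothed_sym cd_conn.
  exact/connect1/smooth_univ_sigma.
have univ_sub : subrel (univ K) (connect smoothed).
  move=> x y /or4P[] /eqP->.
  - exact: sigma_edge.
  - by rewrite smoothed_sym sigma_edge.
  - exact: connect1 (smooth_univ_alpha _).
  - by rewrite smoothed_sym connect1 ?smooth_univ_alpha.
have : ncomp smoothed <= 1.
  by apply/ncomp_le1P => // x y; apply: connect_sub univ_sub _ _ (univ_conn x y).
by rewrite leqNgt smooth_split.
Qed.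

Lemma smoothing_side q : q = P \/ q = s (s P) ->
  ~~ connect smoothed q (s (s q)) -> side q [set y | connect smoothed q y].
Proof.
move=> qP q_s2q; have [q_sq s2q_s3q] := smooth_univ_pair qP.
have smoothed_sym := sym_connect_sym sym_smooth_univ.
split => [||||| x | x].
- by case: qP => ->; rewrite ?cdarts_sigma smooth_pivot_cdarts.
- by rewrite inE connect0.
- by rewrite inE connect1.
- by rewrite inE.
- rewrite inE; apply: contra q_s2q => q_s3q; apply: connect_trans q_s3q _.
  by rewrite smoothed_sym connect1.
- by rewrite !inE => qx; apply: connect_trans qx (connect1 (smooth_univ_alpha x)).
- move=> + x_cd; rewrite !inE => qx.
  exact: connect_trans qx (connect1 (smooth_univ_sigma x_cd)).
Qed.

Lemma smoothing_removable : (forall x y, connect (univ K) x y) ->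
  1 < ncomp smoothed -> num_knotoidal K <= 1 -> removable K c.
Proof.
move=> univ_conn smooth_split knot1.
have P_s2P := smooth_univ_separates univ_conn smooth_split.
have s2P_P : ~~ connect smoothed (s (s P)) (s (s (s (s P)))).
  by rewrite sigma4 (sym_connect_sym sym_smooth_univ).
apply: (removable_of_sides (smoothing_side (or_introl erefl) P_s2P)
  (smoothing_side (or_intror erefl) s2P_P) _ (card_endpoints_le2 knot1)).
apply/pred0P => x /=; rewrite !inE; apply/negbTE/negP => /andP[Px s2Px].
move/negP: P_s2P; apply.
by apply: connect_trans Px _; rewrite (sym_connect_sym sym_smooth_univ).
Qed.

End Smoothing.

End Linkoid.

Theorem lemma4p5 (D : finType) (K : diagram D) (c : D) :
  is_linkoid K ->
  is_crossing K c ->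
  num_knotoidal K = 1 ->
  0 < num_loops K ->
  separating K c ->
  removable K c.
Proof.
move=> linkK c_cross knot1 _ [not_split [b split_b]].
have [alphaK alpha_fixfree sigma4 sigma2] := linkoid_darts linkK.
have [univ_conn no_free_loops] := connected_not_split c not_split.
have smooth_split : 1 < ncomp (smooth_univ K c b).
  by move: split_b; rewrite /n_smooth no_free_loops addn0.
apply: (smoothing_removable alphaK alpha_fixfree sigma4 sigma2 c_cross univ_conn
  smooth_split).
by rewrite knot1.
Qed.
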